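(* For $f,g\in\mathbb Z^{m+\infty}_+$, $f\ge g$ in the Bruhat ordering if and only if $f^\natural\succcurlyeq g^\natural$ in the super Bruhat ordering.
   Context: $I(m|\infty)=\{-m,\dots,-1\}\cup\{1,2,\dots\}$. $\mathbb Z^{m+\infty}_+$ is the set of $f:I(m|\infty)\to\mathbb Z$ with $f(-m)>\cdots>f(-1)$, $f(1)>f(2)>\cdots$, $f(i)=1-i$ for $i\gg0$; $\mathbb Z^{m|\infty}_+$ the set with $f(-m)>\cdots>f(-1)$, $f(1)<f(2)<\cdots$, $f(i)=i$ for $i\gg0$. For $f\in\mathbb Z^{m+\infty}_+$, $f^\natural\in\mathbb Z^{m|\infty}_+$ has $f^\natural(i)=f(i)$ for $i<0$, and $(f^\natural(1)<f^\natural(2)<\cdots)$ is the increasing enumeration of $\mathbb Z\setminus\{f(1),f(2),\dots\}$. Bruhat ordering: transitive closure of $f<f\cdot\tau_{ij}$ for $i<j$ in $I(m|\infty)$ with $f(i)<f(j)$, where $\tau_{ij}$ is the transposition and $(f\cdot\tau)(k)=f(\tau(k))$. Super Bruhat ordering: with $d_i:j\mapsto-\mathrm{sgn}(i)\delta_{ij}$, write $f\downarrow g$ if $g=f-d_i+d_j$ for some $i<0<j$ with $f(i)=f(j)$, or $g=f\cdot\tau_{ij}$ for some $i<j<0$ with $f(i)>f(j)$, or $g=f\cdot\tau_{ij}$ for some $0<i<j$ with $f(i)<f(j)$; $f\succ g$ means there is a chain $f=h_1\downarrow h_2\downarrow\cdots\downarrow h_r=g$, and $\succcurlyeq$ means $\succ$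 or $=$. *)

(* integers Z, functions I(m|oo) -> Z represented as Z -> Z,
   only their values on I(m|oo) matter (all relations compare on I). *)
From Stdlib Require Import ZArith Relations ClassicalEpsilon.
Open Scope Z_scope.

Definition inI (m : nat) (i : Z) : Prop :=
  (- Z.of_nat m <= i <= -1) \/ 1 <= i.

Definition eqI (m : nat) (f g : Z -> Z) : Prop :=
  forall k, inI m k -> f k = g k.

Definition in_plus (m : nat) (f : Z -> Z) : Prop :=
  (forall i, - Z.of_nat m <= i < -1 -> f i > f (i + 1)) /\
  (forall i, 1 <= i -> f i > f (i + 1)) /\
  (exists N, forall i, N <= i -> f i = 1 - i).

Definition in_super (m : nat) (f : Z -> Z) : Prop :=
  (forall i, - Z.of_nat m <= i < -1 -> f i > f (i + 1)) /\
  (forall i, 1 <= i -> f i < f (i + 1)) /\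
  (exists N, forall i, N <= i -> f i = i).

Definition is_natural (m : nat) (f h : Z -> Z) : Prop :=
  (forall i, - Z.of_nat m <= i <= -1 -> h i = f i) /\
  (forall i, 1 <= i -> h i < h (i + 1)) /\
  (forall x, (exists j, 1 <= j /\ h j = x) <-> ~ (exists j, 1 <= j /\ f j = x)).

Definition natural (m : nat) (f : Z -> Z) : Z -> Z :=
  epsilon (inhabits (fun _ : Z => 0)) (is_natural m f).

Definition tau (i j k : Z) : Z :=
  if Z.eqb k i then j else if Z.eqb k j then i else k.
Definition act (f : Z -> Z) (i j : Z) : Z -> Z := fun k => f (tau i j k).

Definition bruhat_step (m : nat) (f f' : Z -> Z) : Prop :=
  exists i j, inI m i /\ inI m j /\ i < j /\ f i < f j /\ eqI m f' (act f i j).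

Definition bruhat_le (m : nat) (g f : Z -> Z) : Prop :=
  eqI m g f \/ clos_trans (Z -> Z) (bruhat_step m) g f.

Definition d (i : Z) : Z -> Z := fun j => if Z.eqb i j then - Z.sgn i else 0.

Definition super_down (m : nat) (f g : Z -> Z) : Prop :=
  (exists i j, inI m i /\ inI m j /\ i < 0 < j /\ f i = f j /\
      eqI m g (fun k => f k - d i k + d j k)) \/
  (exists i j, inI m i /\ inI m j /\ i < j < 0 /\ f i > f j /\ eqI m g (act f i j)) \/
  (exists i j, inI m i /\ inI m j /\ 0 < i < j /\ f i < f j /\ eqI m g (act f i j)).

Definition super_gt (m : nat) (f g : Z -> Z) : Prop :=
  clos_trans (Z -> Z) (super_down m) f g.

Definition super_ge (m : nat) (f g : Z -> Z) : Prop :=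
  super_gt m f g \/ eqI m f g.

(* Both orders are detected by the same invariants.  A Bruhat step permutes the values of
   f on I(m|oo); a super move either permutes values inside one half of f^natural or
   lowers a value shared by the negative and the positive half by one.  So along either
   kind of chain a weighted count of the values is unchanged (weight 1 on every index for
   Bruhat steps, weight sgn k for super moves), while the number of negative entries above
   any threshold moves in one direction only.  Since the positive half of f^natural is the
   complement of the positive half of f, either relation forces f and g to have the same
   multiset of values and f to dominate g entrywise on the negative indices.

   Conversely, let f dominate g in this sense with f <> g, let i0 be the first negative
   index where they differ, a = f i0, and b < a the largest value not covered by any
   interval (g k, f k].  Then b is a value of the positive half of f, and exchanging a and
   b between the two halves (keeping both sorted) gives f' below f in the Bruhat order with
   f'^natural reachable from f^natural by super moves.  As f' still dominates g and has a
   smaller sum over the negative indices, induction on that sum concludes. *)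

From Stdlib Require Import ZArith Lia Relations FunctionalExtensionality Classical ClassicalEpsilon.
Open Scope Z_scope.

Ltac zcase := repeat match goal with
  | |- context [Z.eqb ?a ?b] => destruct (Z.eqb_spec a b)
  | |- context [Z.ltb ?a ?b] => destruct (Z.ltb_spec a b)
  | |- context [Z.leb ?a ?b] => destruct (Z.leb_spec a b)
  end.

Lemma Z_least (P : Z -> Prop) (lo x : Z) : lo <= x -> P x ->
  exists y, lo <= y <= x /\ P y /\ forall z, lo <= z < y -> ~ P z.
Proof.
  intros Hx HP. remember (Z.to_nat (x - lo)) as n eqn:En.
  revert x Hx HP En. induction n as [n IH] using lt_wf_ind. intros x Hx HP En.
  destruct (classic (exists z, lo <= z < x /\ P z)) as [[z [Hz Pz]]|Hno].
  - destruct (IH (Z.to_nat (z - lo))) with (x := z) as [y [Hy1 [Hy2 Hy3]]]; try lia; auto.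
    exists y; repeat split; auto; lia.
  - exists x. split; [lia|split; auto]. intros z Hz Pz. apply Hno. exists z; split; auto; lia.
Qed.

Lemma Z_greatest (P : Z -> Prop) (hi x : Z) : x <= hi -> P x ->
  exists y, x <= y <= hi /\ P y /\ forall z, y < z <= hi -> ~ P z.
Proof.
  intros Hx HP. destruct (Z_least (fun z => P (- z)) (- hi) (- x)) as [y [Hy [Py Hz]]].
  - lia.
  - rewrite Z.opp_involutive; auto.
  - exists (- y). split; [lia|split; auto]. intros z Hz' Pz.
    apply (Hz (- z)); [lia|rewrite Z.opp_involutive; auto].
Qed.

Lemma Z_decr_of_succ (h : Z -> Z) lo hi : (forall i, lo <= i < hi -> h (i + 1) < h i) ->
  forall i j, lo <= i -> i < j -> j <= hi -> h j < h i.
Proof.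
  intros H i j Hi Hij Hj. remember (Z.to_nat (j - i - 1)) as n eqn:En.
  revert j Hij Hj En. induction n; intros j Hij Hj En.
  - replace j with (i + 1) by lia. apply H; lia.
  - assert (h (j - 1) < h i) by (apply IHn; lia).
    assert (h (j - 1 + 1) < h (j - 1)) by (apply H; lia).
    replace (j - 1 + 1) with j in * by lia. lia.
Qed.

Lemma Z_incr_of_succ (h : Z -> Z) lo hi : (forall i, lo <= i < hi -> h i < h (i + 1)) ->
  forall i j, lo <= i -> i < j -> j <= hi -> h i < h j.
Proof.
  intros H i j Hi Hij Hj.
  enough (- h j < - h i) by lia.
  apply (Z_decr_of_succ (fun k => - h k) lo hi); auto. intros k Hk. specialize (H k Hk). lia.
Qed.

Lemma Z_incr_lower_bound (h : Z -> Z) : (forall i, 1 <= i -> h i < h (i + 1)) ->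
  forall k, 1 <= k -> h 1 + (k - 1) <= h k.
Proof.
  intros H k Hk.
  enough (forall n : nat, h 1 + Z.of_nat n <= h (1 + Z.of_nat n)) as L.
  { specialize (L (Z.to_nat (k - 1))). replace (1 + Z.of_nat (Z.to_nat (k - 1))) with k in L; lia. }
  intros n. induction n as [|n IH]; [simpl; lia|].
  specialize (H (1 + Z.of_nat n) ltac:(lia)).
  replace (1 + Z.of_nat (S n)) with (1 + Z.of_nat n + 1) by lia. lia.
Qed.

Lemma inj_of_neq (D : Z -> Prop) (h : Z -> Z) : (forall i j, D i -> D j -> i < j -> h i <> h j) ->
  forall k l, D k -> D l -> h k = h l -> k = l.
Proof.
  intros H k l Hk Hl E. destruct (Z.lt_total k l) as [Hlt|[Heq|Hgt]]; auto.
  - exfalso. apply (H k l); auto.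
  - exfalso. apply (H l k); auto.
Qed.

Definition ind (P : Prop) : Z := if excluded_middle_informative P then 1 else 0.

Lemma ind_true (P : Prop) : P -> ind P = 1.
Proof. unfold ind; destruct excluded_middle_informative; tauto. Qed.

Lemma ind_false (P : Prop) : ~ P -> ind P = 0.
Proof. unfold ind; destruct excluded_middle_informative; tauto. Qed.

Lemma ind_iff (P Q : Prop) : (P <-> Q) -> ind P = ind Q.
Proof. intros H. unfold ind; do 2 destruct excluded_middle_informative; tauto. Qed.

Lemma ind_cases (P : Prop) : ind P = 0 /\ ~ P \/ ind P = 1 /\ P.
Proof. unfold ind; destruct excluded_middle_informative; tauto. Qed.

Lemma ind_not (P : Prop) : ind (~ P) = 1 - ind P.
Proof. destruct (ind_cases P) as [[-> HP]|[-> HP]]; [rewrite ind_true|rewrite ind_false]; auto. Qed.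

Lemma ind_exchange (A : Prop) (x y z : Z) : (x = y -> A) -> (x = z -> ~ A) -> y <> z ->
  ind ((A /\ x <> y) \/ x = z) = ind A - ind (x = y) + ind (x = z).
Proof.
  intros Hy Hz Hyz. destruct (Z.eq_dec x y) as [->|Hxy]; [|destruct (Z.eq_dec x z) as [->|Hxz]].
  - rewrite (ind_true (y = y)), ind_false, (ind_false (y = z)), ind_true by tauto; lia.
  - rewrite (ind_false (z = y)), (ind_true (z = z)), ind_true, ind_false by tauto; lia.
  - rewrite (ind_false (x = y)), (ind_false (x = z)) by auto.
    rewrite (ind_iff _ A) by tauto. lia.
Qed.

Fixpoint zsum (F : Z -> Z) (lo : Z) (n : nat) : Z :=
  match n with
  | O => 0
  | S n' => zsum F lo n' + F (lo + Z.of_nat n')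
  end.

Lemma zsum_ext F G lo n : (forall k, lo <= k < lo + Z.of_nat n -> F k = G k) ->
  zsum F lo n = zsum G lo n.
Proof.
  induction n; simpl; intros H; auto.
  rewrite IHn, H by (intros; try apply H; lia). reflexivity.
Qed.

Lemma zsum_le F G lo n : (forall k, lo <= k < lo + Z.of_nat n -> F k <= G k) ->
  zsum F lo n <= zsum G lo n.
Proof.
  induction n; simpl; intros H; [lia|].
  specialize (IHn ltac:(intros; apply H; lia)). specialize (H (lo + Z.of_nat n) ltac:(lia)). lia.
Qed.

Lemma zsum_lt F G lo n : (forall k, lo <= k < lo + Z.of_nat n -> F k <= G k) ->
  (exists k, lo <= k < lo + Z.of_nat n /\ F k < G k) -> zsum F lo n < zsum G lo n.
Proof.
  induction n; simpl; intros H [k [Hk Hlt]]; [lia|].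
  destruct (Z.eq_dec k (lo + Z.of_nat n)) as [->|].
  - pose proof (zsum_le F G lo n ltac:(intros; apply H; lia)). lia.
  - specialize (IHn ltac:(intros; apply H; lia) ltac:(exists k; split; [lia|auto])).
    specialize (H (lo + Z.of_nat n) ltac:(lia)). lia.
Qed.

Lemma zsum_split F lo a b : zsum F lo (a + b) = zsum F lo a + zsum F (lo + Z.of_nat a) b.
Proof.
  induction b; simpl.
  - rewrite Nat.add_0_r. lia.
  - rewrite Nat.add_succ_r. simpl. rewrite IHb.
    replace (lo + Z.of_nat (a + b)) with (lo + Z.of_nat a + Z.of_nat b) by lia. lia.
Qed.

Lemma zsum_split_at F lo n c : lo <= c <= lo + Z.of_nat n ->
  zsum F lo n = zsum F lo (Z.to_nat (c - lo)) + zsum F c (n - Z.to_nat (c - lo)).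
Proof.
  intros Hc. replace n with (Z.to_nat (c - lo) + (n - Z.to_nat (c - lo)))%nat at 1 by lia.
  rewrite zsum_split. do 2 f_equal. lia.
Qed.

Lemma zsum_const c lo n : zsum (fun _ => c) lo n = c * Z.of_nat n.
Proof. induction n; simpl; [lia|]. rewrite IHn. lia. Qed.

Lemma zsum_scale c F lo n : zsum (fun k => c * F k) lo n = c * zsum F lo n.
Proof. induction n; simpl; [lia|]. rewrite IHn. lia. Qed.

Lemma zsum_point F G lo n i : lo <= i < lo + Z.of_nat n -> (forall k, k <> i -> G k = F k) ->
  zsum G lo n = zsum F lo n + G i - F i.
Proof.
  induction n; simpl; intros Hi H; [lia|].
  destruct (Z.eq_dec (lo + Z.of_nat n) i) as [<-|].
  - rewrite (zsum_ext G F) by (intros; apply H; lia). lia.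
  - rewrite IHn, (H (lo + Z.of_nat n)) by (auto; lia). lia.
Qed.

Lemma zsum_count_inj (h : Z -> Z) lo n x :
  (forall k l, lo <= k < lo + Z.of_nat n -> lo <= l < lo + Z.of_nat n -> h k = h l -> k = l) ->
  zsum (fun k => Z.b2z (h k =? x)) lo n = ind (exists k, lo <= k < lo + Z.of_nat n /\ h k = x).
Proof.
  induction n; simpl; intros Hinj.
  - rewrite ind_false; [reflexivity|]. intros [k [Hk _]]. lia.
  - rewrite IHn by (intros; apply Hinj; lia).
    destruct (Z.eqb_spec (h (lo + Z.of_nat n)) x) as [Hx|Hx]; simpl.
    + rewrite ind_false, ind_true; [lia| |].
      * exists (lo + Z.of_nat n). split; [lia|auto].
      * intros [k [Hk Hkx]]. rewrite <- Hx in Hkx. apply Hinj in Hkx; lia.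
    + rewrite Z.add_0_r. apply ind_iff.
      split; intros [k [Hk Hkx]]; exists k; split; auto; try lia.
      destruct (Z.eq_dec k (lo + Z.of_nat n)); [subst; contradiction|lia].
Qed.

Lemma tau_inI m i j k : inI m i -> inI m j -> inI m k -> inI m (tau i j k).
Proof. intros. unfold tau. zcase; auto. Qed.

Lemma act_i h i j : act h i j i = h j.
Proof. unfold act, tau. rewrite Z.eqb_refl. auto. Qed.

Lemma act_j h i j : act h i j j = h i.
Proof. unfold act, tau. zcase; congruence. Qed.

Lemma act_other h i j k : k <> i -> k <> j -> act h i j k = h k.
Proof. intros. unfold act, tau. zcase; lia. Qed.

Lemma tau_involutive i j k : tau i j (tau i j k) = k.
Proof. unfold tau. destruct (Z.eqb_spec k i), (Z.eqb_spec k j); zcase; congruence. Qed.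

Lemma act_involutive h i j : act (act h i j) i j = h.
Proof. apply functional_extensionality. intros k. unfold act. rewrite tau_involutive. auto. Qed.

Definition upd (h : Z -> Z) (i v : Z) : Z -> Z := fun k => if k =? i then v else h k.

Lemma upd_at h i v : upd h i v i = v.
Proof. unfold upd. rewrite Z.eqb_refl. auto. Qed.

Lemma upd_other h i v k : k <> i -> upd h i v k = h k.
Proof. unfold upd. intros. zcase; lia. Qed.

Lemma act_upd h i j : i <> j -> act h i j = upd (upd h i (h j)) j (h i).
Proof. intros. apply functional_extensionality. intros k. unfold act, upd, tau. zcase; congruence. Qed.

Definition rot1 (h : Z -> Z) (s t : Z) : Z -> Z := fun k =>
  if k <? s then h k else if k <? t then h (k + 1) else if k =? t then h s else h k.

Definition rotr1 (h : Z -> Z) (s t : Z) : Z -> Z := fun k =>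
  if k <? s then h k else if k =? s then h t else if k <=? t then h (k - 1) else h k.

Lemma rot1_in h s t k : s <= k < t -> rot1 h s t k = h (k + 1).
Proof. intros. unfold rot1. zcase; lia. Qed.

Lemma rot1_last h s t : s <= t -> rot1 h s t t = h s.
Proof. intros. unfold rot1. zcase; lia. Qed.

Lemma rot1_out h s t k : k < s \/ t < k -> rot1 h s t k = h k.
Proof. intros. unfold rot1. zcase; lia. Qed.

Lemma rotr1_first h s t : s <= t -> rotr1 h s t s = h t.
Proof. intros. unfold rotr1. zcase; lia. Qed.

Lemma rotr1_in h s t k : s < k <= t -> rotr1 h s t k = h (k - 1).
Proof. intros. unfold rotr1. zcase; lia. Qed.

Lemma rotr1_out h s t k : s <= t -> k < s \/ t < k -> rotr1 h s t k = h k.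
Proof. intros. unfold rotr1. zcase; lia. Qed.

Lemma rotr1_rot1 h s t : s <= t -> rotr1 (rot1 h s t) s t = h.
Proof.
  intros. apply functional_extensionality. intros k. unfold rotr1, rot1.
  zcase; subst; try lia; f_equal; lia.
Qed.

Lemma rot1_rotr1 h s t : s <= t -> rot1 (rotr1 h s t) s t = h.
Proof.
  intros. apply functional_extensionality. intros k. unfold rotr1, rot1.
  zcase; subst; try lia; f_equal; lia.
Qed.

Definition img_neg (m : nat) (h : Z -> Z) (x : Z) : Prop :=
  exists k, - Z.of_nat m <= k <= -1 /\ h k = x.

Definition img_pos (h : Z -> Z) (x : Z) : Prop := exists j, 1 <= j /\ h j = x.

Lemma img_neg_ext m h h' x : (forall k, - Z.of_nat m <= k <= -1 -> h k = h' k) ->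
  img_neg m h x <-> img_neg m h' x.
Proof. intros E. split; intros [k [Hk <-]]; exists k; split; auto; rewrite E; auto. Qed.

Lemma img_pos_ext h h' x : (forall k, 1 <= k -> h k = h' k) -> img_pos h x <-> img_pos h' x.
Proof. intros E. split; intros [k [Hk <-]]; exists k; split; auto; rewrite E; auto. Qed.

Section Reinsertion.

Variables (m : nat) (h : Z -> Z) (v : Z).

Lemma img_neg_reinsert s t x : - Z.of_nat m <= s <= t -> t <= -1 ->
  (forall k l, - Z.of_nat m <= k <= -1 -> - Z.of_nat m <= l <= -1 -> h k = h l -> k = l) ->
  img_neg m (upd (rot1 h s t) t v) x <-> (img_neg m h x /\ x <> h s) \/ x = v.
Proof.
  intros Hs Ht Inj. unfold upd, rot1. split.
  - intros [k [Hk E]]. revert E. zcase; intros E; subst x; try (right; reflexivity);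
      left; (split; [eexists; split; [|reflexivity]; lia|intros E'; apply Inj in E'; lia]).
  - intros [[[k [Hk E]] Hne]|E].
    + assert (k <> s) by (intros ->; auto).
      destruct (Z_lt_le_dec k s); [|destruct (Z_le_gt_dec k t)].
      * exists k. split; [lia|]. zcase; lia.
      * exists (k - 1). split; [lia|]. zcase; try lia. subst; f_equal; lia.
      * exists k. split; [lia|]. zcase; lia.
    + exists t. split; [lia|]. zcase; lia.
Qed.

Lemma img_pos_reinsert u w x : 1 <= u <= w ->
  (forall k l, 1 <= k -> 1 <= l -> h k = h l -> k = l) ->
  img_pos (upd (rotr1 h u w) u v) x <-> (img_pos h x /\ x <> h w) \/ x = v.
Proof.
  intros Hu Inj. unfold upd, rotr1. split.
  - intros [k [Hk E]]. revert E. zcase; intros E; subst x; try (right; reflexivity);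
      left; (split; [eexists; split; [|reflexivity]; lia|intros E'; apply Inj in E'; lia]).
  - intros [[[k [Hk E]] Hne]|E].
    + assert (k <> w) by (intros ->; auto).
      destruct (Z_lt_le_dec k u); [|destruct (Z_lt_le_dec k w)].
      * exists k. split; [lia|]. zcase; lia.
      * exists (k + 1). split; [lia|]. zcase; try lia. subst; f_equal; lia.
      * exists k. split; [lia|]. zcase; lia.
    + exists u. split; [lia|]. zcase; lia.
Qed.

Lemma neg_reinsert_decr s t : - Z.of_nat m <= s <= t -> t <= -1 ->
  (forall i j, - Z.of_nat m <= i -> i < j -> j <= -1 -> h j < h i) ->
  (forall k, - Z.of_nat m <= k <= t -> k <> s -> v < h k) ->
  (forall k, t < k <= -1 -> h k < v) ->
  forall i j, - Z.of_nat m <= i -> i < j -> j <= -1 ->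
  upd (rot1 h s t) t v j < upd (rot1 h s t) t v i.
Proof.
  intros Hs Ht D V1 V2 i j Hi Hij Hj. unfold upd, rot1.
  zcase; try lia; first [apply D; lia | apply V1; lia | apply V2; lia].
Qed.

Lemma pos_reinsert_decr u w : 1 <= u <= w ->
  (forall i j, 1 <= i -> i < j -> h j < h i) ->
  (forall k, 1 <= k < u -> v < h k) ->
  (forall k, u <= k -> h k < v) ->
  forall i j, 1 <= i -> i < j -> upd (rotr1 h u w) u v j < upd (rotr1 h u w) u v i.
Proof.
  intros Hu D V1 V2 i j Hi Hij. unfold upd, rotr1.
  zcase; try lia; first [apply D; lia | apply V1; lia | apply V2; lia].
Qed.

Lemma pos_reinsert_incr u w : 1 <= u <= w ->
  (forall i j, 1 <= i -> i < j -> h i < h j) ->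
  (forall k, 1 <= k < u -> h k < v) ->
  (forall k, u <= k -> v < h k) ->
  forall i j, 1 <= i -> i < j -> upd (rotr1 h u w) u v i < upd (rotr1 h u w) u v j.
Proof.
  intros Hu D V1 V2 i j Hi Hij. unfold upd, rotr1.
  zcase; try lia; first [apply D; lia | apply V1; lia | apply V2; lia].
Qed.

End Reinsertion.

(** * Counting invariants of the two orders *)

Lemma eqI_refl m f : eqI m f f.
Proof. intros k _; auto. Qed.

Lemma eqI_sym m f g : eqI m f g -> eqI m g f.
Proof. intros H k Hk; symmetry; auto. Qed.

Lemma eqI_trans m f g h : eqI m f g -> eqI m g h -> eqI m f h.
Proof. intros H1 H2 k Hk; rewrite H1, H2; auto. Qed.

Lemma act_eqI m h h' i j : eqI m h h' -> inI m i -> inI m j -> eqI m (act h i j) (act h' i j).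
Proof. intros H Hi Hj k Hk. apply H, tau_inI; auto. Qed.

Lemma bruhat_step_eqI_l m h h' h'' : eqI m h h' -> bruhat_step m h' h'' -> bruhat_step m h h''.
Proof.
  intros E [i [j [Hi [Hj [Hij [Hv He]]]]]]. exists i, j. rewrite (E i Hi), (E j Hj).
  repeat split; auto. eapply eqI_trans; [exact He|]. apply act_eqI; auto. apply eqI_sym; auto.
Qed.

Lemma super_down_eqI_r m h h' h'' : super_down m h h' -> eqI m h' h'' -> super_down m h h''.
Proof.
  intros H E. pose proof (eqI_sym _ _ _ E) as E'.
  destruct H as [[i [j H]]|[[i [j H]]|[i [j H]]]]; [left|right; left|right; right];
    exists i, j; intuition; eapply eqI_trans; eauto.
Qed.

Lemma clos_trans_sub {A} (R S : relation A) : (forall x y, R x y -> S x y) ->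
  (forall x y z, S x y -> S y z -> S x z) -> forall x y, clos_trans A R x y -> S x y.
Proof. intros HRS HS x y H. induction H; eauto. Qed.

Definition eventually (P : nat -> Prop) : Prop := exists W0, forall W, (W0 <= W)%nat -> P W.

Lemma eventually_and (P Q : nat -> Prop) :
  eventually P -> eventually Q -> eventually (fun W => P W /\ Q W).
Proof. intros [W1 H1] [W2 H2]. exists (Nat.max W1 W2). intros W HW. split; [apply H1|apply H2]; lia. Qed.

(* Index 0 lies in the window [-m, W] but not in I(m|oo); every weight used below vanishes there. *)
Definition wcount (w : Z -> Z) (m : nat) (h : Z -> Z) (W : nat) (x : Z) : Z :=
  zsum (fun k => w k * Z.b2z (h k =? x)) (- Z.of_nat m) (m + 1 + W).

Definition nge (m : nat) (h : Z -> Z) (x : Z) : Z :=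
  zsum (fun k => Z.b2z (x <=? h k)) (- Z.of_nat m) m.

Lemma wcount_eqI w m h h' W x : w 0 = 0 -> eqI m h h' -> wcount w m h W x = wcount w m h' W x.
Proof.
  intros Hw E. apply zsum_ext. intros k Hk. destruct (Z.eq_dec k 0) as [->|]; [rewrite Hw; lia|].
  rewrite E; [auto|unfold inI; lia].
Qed.

Lemma nge_eqI m h h' x : eqI m h h' -> nge m h x = nge m h' x.
Proof. intros E. apply zsum_ext. intros k Hk. rewrite E; [auto|unfold inI; lia]. Qed.

Lemma wcount_upd w m h W x i v : - Z.of_nat m <= i <= Z.of_nat W ->
  wcount w m (upd h i v) W x = wcount w m h W x + w i * (Z.b2z (v =? x) - Z.b2z (h i =? x)).
Proof.
  intros Hi. unfold wcount.
  rewrite (zsum_point (fun k => w k * Z.b2z (h k =? x)) _ _ _ i); [rewrite upd_at; lia|lia|].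
  intros k Hk. rewrite upd_other; auto.
Qed.

Lemma nge_upd m h x i v : - Z.of_nat m <= i <= -1 ->
  nge m (upd h i v) x = nge m h x + Z.b2z (x <=? v) - Z.b2z (x <=? h i).
Proof.
  intros Hi. unfold nge.
  rewrite (zsum_point (fun k => Z.b2z (x <=? h k)) _ _ _ i); [rewrite upd_at; lia|lia|].
  intros k Hk. rewrite upd_other; auto.
Qed.

Lemma nge_upd_pos m h x i v : 0 <= i -> nge m (upd h i v) x = nge m h x.
Proof. intros Hi. apply zsum_ext. intros k Hk. rewrite upd_other; auto; lia. Qed.

Definition counts_below (w : Z -> Z) (m : nat) (h h' : Z -> Z) : Prop :=
  eventually (fun W => forall x, wcount w m h W x = wcount w m h' W x) /\
  forall x, nge m h x <= nge m h' x.

Lemma counts_below_trans w m h1 h2 h3 :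
  counts_below w m h1 h2 -> counts_below w m h2 h3 -> counts_below w m h1 h3.
Proof.
  intros [E1 N1] [E2 N2]. split.
  - destruct (eventually_and _ _ E1 E2) as [W0 H]. exists W0. intros W HW x.
    destruct (H W HW) as [A B]. rewrite A, B. auto.
  - intros x. specialize (N1 x). specialize (N2 x). lia.
Qed.

Lemma counts_below_eqI w m h h' : w 0 = 0 -> eqI m h h' -> counts_below w m h h'.
Proof.
  intros Hw E. split.
  - exists O. intros W _ x. apply wcount_eqI; auto.
  - intros x. rewrite (nge_eqI _ _ _ _ E). lia.
Qed.

Lemma wcount_act w m h i j : w i = w j -> i <> j -> inI m i -> inI m j ->
  eventually (fun W => forall x, wcount w m (act h i j) W x = wcount w m h W x).
Proof.
  intros Hw Hij Hi Hj. exists (Z.to_nat (Z.max i j)). intros W HW x. rewrite act_upd by auto.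
  unfold inI in *. rewrite !wcount_upd by lia. rewrite upd_other by auto. rewrite Hw. lia.
Qed.

Lemma bruhat_step_counts m h h' : bruhat_step m h h' -> counts_below (fun k => Z.abs (Z.sgn k)) m h h'.
Proof.
  intros [i [j [Hi [Hj [Hij [Hv He]]]]]].
  eapply counts_below_trans; [|apply counts_below_eqI, eqI_sym, He; auto].
  assert (Hw : forall k, inI m k -> Z.abs (Z.sgn k) = 1)
    by (intros k [Hk|Hk]; [rewrite Z.sgn_neg|rewrite Z.sgn_pos]; lia).
  split.
  - destruct (wcount_act (fun k => Z.abs (Z.sgn k)) m h i j) as [W0 H]; auto; [rewrite !Hw; auto|lia|].
    exists W0. intros W HW x. rewrite H; auto.
  - intros x. rewrite act_upd by lia. unfold inI in *.
    destruct (Z_lt_le_dec j 0); [|destruct (Z_lt_le_dec i 0)].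
    + rewrite !nge_upd, upd_other by lia. lia.
    + rewrite nge_upd_pos, nge_upd by lia. zcase; simpl; lia.
    + rewrite !nge_upd_pos by lia. lia.
Qed.

Lemma super_down_counts m h h' : super_down m h h' -> counts_below Z.sgn m h' h.
Proof.
  intros [[i [j [Hi [Hj [Hij [Hv He]]]]]]
         |[[i [j [Hi [Hj [Hij [Hv He]]]]]]|[i [j [Hi [Hj [Hij [Hv He]]]]]]]];
    (eapply counts_below_trans; [apply counts_below_eqI; [reflexivity|exact He]|]); unfold inI in *.
  - replace (fun k => h k - d i k + d j k) with (upd (upd h i (h i - 1)) j (h j - 1)).
    2:{ apply functional_extensionality. intros k. unfold upd, d.
        zcase; subst; rewrite ?Z.sgn_neg, ?Z.sgn_pos by lia; lia. }
    split.
    + exists (Z.to_nat j). intros W HW x. rewrite !wcount_upd by lia.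
      rewrite upd_other, Z.sgn_neg, Z.sgn_pos, Hv by lia. lia.
    + intros x. rewrite nge_upd_pos, nge_upd by lia. zcase; simpl; lia.
  - split.
    + destruct (wcount_act Z.sgn m h i j) as [W0 H]; auto; [rewrite !Z.sgn_neg; lia|lia|].
      exists W0; auto.
    + intros x. rewrite act_upd by lia. rewrite !nge_upd, upd_other by lia. lia.
  - split.
    + destruct (wcount_act Z.sgn m h i j) as [W0 H]; auto; [rewrite !Z.sgn_pos; lia|lia|].
      exists W0; auto.
    + intros x. rewrite act_upd by lia. rewrite !nge_upd_pos by lia. lia.
Qed.

Lemma bruhat_le_counts m g f : bruhat_le m g f -> counts_below (fun k => Z.abs (Z.sgn k)) m g f.
Proof.
  intros [E|C]; [apply counts_below_eqI; auto|].
  revert g f C. apply clos_trans_sub; [apply bruhat_step_counts|apply counts_below_trans].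
Qed.

Lemma super_ge_counts m F G : super_ge m F G -> counts_below Z.sgn m G F.
Proof.
  intros [C|E]; [|apply counts_below_eqI, eqI_sym; auto].
  apply (clos_trans_sub (super_down m) (fun a b => counts_below Z.sgn m b a)); auto.
  - apply super_down_counts.
  - intros a b c H1 H2. eapply counts_below_trans; eauto.
Qed.

Lemma enum_exists (T : Z -> Prop) (L : Z) : (forall y, T y -> L <= y) ->
  (forall y, exists z, y < z /\ T z) ->
  exists e : Z -> Z, (forall i, 1 <= i -> e i < e (i + 1)) /\
    (forall x, (exists j, 1 <= j /\ e j = x) <-> T x).
Proof.
  intros HL Hunb.
  set (is_next := fun y z => y < z /\ T z /\ forall w, y < w < z -> ~ T w).
  set (nxt := fun y => epsilon (inhabits 0) (is_next y)).
  assert (Hnxt : forall y, is_next y (nxt y)).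
  { intros y. apply epsilon_spec. destruct (Hunb y) as [z [Hz Tz]].
    destruct (Z_least T (y + 1) z) as [z' [Hz' [Tz' Hmin]]]; [lia|auto|].
    exists z'. repeat split; auto; [lia|]. intros w Hw. apply Hmin. lia. }
  set (it := fun n : nat => Nat.iter n nxt (L - 1)).
  assert (it_S : forall n, it (S n) = nxt (it n)) by reflexivity.
  assert (it_grow : forall n, L - 1 + Z.of_nat n <= it n).
  { induction n; [simpl; lia|]. rewrite it_S. destruct (Hnxt (it n)) as [H _]. lia. }
  assert (it_onto : forall n x, T x -> x <= it n -> exists k, it (S k) = x).
  { induction n as [|n IH]; intros x Tx Hx; [specialize (HL x Tx); simpl in Hx; lia|].
    destruct (Z_le_gt_dec x (it n)); [apply IH; auto|].
    exists n. rewrite it_S in *. destruct (Hnxt (it n)) as [_ [_ Hmin]].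
    destruct (Z.eq_dec (nxt (it n)) x); auto. exfalso. apply (Hmin x); auto. lia. }
  exists (fun j => it (Z.to_nat j)). split; [|intros x; split].
  - intros i Hi. replace (Z.to_nat (i + 1)) with (S (Z.to_nat i)) by lia.
    rewrite it_S. apply Hnxt.
  - intros [j [Hj <-]]. replace (Z.to_nat j) with (S (Z.to_nat (j - 1))) by lia.
    rewrite it_S. apply Hnxt.
  - intros Tx. destruct (it_onto (Z.to_nat (x - L + 1)) x Tx) as [k Hk].
    + specialize (it_grow (Z.to_nat (x - L + 1))). lia.
    + exists (Z.of_nat (S k)). split; [lia|]. rewrite Nat2Z.id. auto.
Qed.

Lemma incr_enum_unique (e1 e2 : Z -> Z) :
  (forall i, 1 <= i -> e1 i < e1 (i + 1)) -> (forall i, 1 <= i -> e2 i < e2 (i + 1)) ->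
  (forall x, (exists j, 1 <= j /\ e1 j = x) <-> (exists j, 1 <= j /\ e2 j = x)) ->
  forall j, 1 <= j -> e1 j = e2 j.
Proof.
  intros M1 M2 Him j Hj.
  assert (M1' : forall i k, 1 <= i -> i < k -> e1 i < e1 k)
    by (intros i k Hi Hik; apply (Z_incr_of_succ e1 1 k); try lia; intros; apply M1; lia).
  assert (M2' : forall i k, 1 <= i -> i < k -> e2 i < e2 k)
    by (intros i k Hi Hik; apply (Z_incr_of_succ e2 1 k); try lia; intros; apply M2; lia).
  remember (Z.to_nat (j - 1)) as n. revert j Hj Heqn. induction n as [n IH] using lt_wf_ind.
  intros j Hj En.
  assert (IHj : forall k, 1 <= k < j -> e1 k = e2 k)
    by (intros k Hk; apply (IH (Z.to_nat (k - 1))); lia).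
  destruct (proj1 (Him (e1 j)) (ex_intro _ j (conj Hj eq_refl))) as [j1 [Hj1 E1]].
  destruct (proj2 (Him (e2 j)) (ex_intro _ j (conj Hj eq_refl))) as [j2 [Hj2 E2]].
  destruct (Z.lt_total j1 j) as [Hlt1|[->|Hgt1]].
  - rewrite <- IHj in E1 by lia. specialize (M1' j1 j ltac:(lia) Hlt1). lia.
  - auto.
  - destruct (Z.lt_total j2 j) as [Hlt2|[->|Hgt2]].
    + rewrite IHj in E2 by lia. specialize (M2' j2 j ltac:(lia) Hlt2). lia.
    + auto.
    + specialize (M1' j j2 ltac:(lia) Hgt2). specialize (M2' j j1 ltac:(lia) Hgt1). lia.
Qed.

Lemma in_plus_neg_decr m f : in_plus m f ->
  forall i j, - Z.of_nat m <= i -> i < j -> j <= -1 -> f j < f i.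
Proof.
  intros [Hn _] i j Hi Hij Hj. apply (Z_decr_of_succ f (- Z.of_nat m) (-1)); auto.
  intros k Hk. specialize (Hn k Hk). lia.
Qed.

Lemma in_plus_pos_decr m f : in_plus m f -> forall i j, 1 <= i -> i < j -> f j < f i.
Proof.
  intros [_ [Hp _]] i j Hi Hij. apply (Z_decr_of_succ f 1 j); auto; [|lia].
  intros k Hk. specialize (Hp k ltac:(lia)). lia.
Qed.

Lemma natural_exists m f : in_plus m f -> exists h, is_natural m f h.
Proof.
  intros Hf. pose proof Hf as [_ [_ [N HN]]].
  destruct (enum_exists (fun y => ~ img_pos f y) (Z.min 0 (1 - N))) as [e [He_incr He_img]].
  - intros y Hy. destruct (Z_lt_le_dec y (Z.min 0 (1 - N))); [|lia]. exfalso. apply Hy.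
    exists (1 - y). split; [lia|]. rewrite HN; lia.
  - intros y. exists (Z.max y (f 1) + 1). split; [lia|]. intros [j [Hj Hfj]].
    destruct (Z.eq_dec j 1) as [->|]; [lia|]. pose proof (in_plus_pos_decr m f Hf 1 j). lia.
  - exists (fun k => if k <? 0 then f k else e k). split; [|split].
    + intros i Hi. zcase; lia.
    + intros i Hi. zcase; try lia. apply He_incr; auto.
    + intros x. change (~ (exists j, 1 <= j /\ f j = x)) with (~ img_pos f x). rewrite <- He_img.
      split; intros [j [Hj Hx]]; exists j; split; auto; revert Hx; zcase; lia.
Qed.

Lemma natural_spec m f : in_plus m f -> is_natural m f (natural m f).
Proof. intros H. unfold natural. apply epsilon_spec, natural_exists; auto. Qed.

Lemma natural_incr m f : in_plus m f ->
  forall i j, 1 <= i -> i < j -> natural m f i < natural m f j.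
Proof.
  intros Hf. destruct (natural_spec m f Hf) as [_ [B _]].
  intros i j Hi Hij. apply (Z_incr_of_succ _ 1 j); try lia. intros; apply B; lia.
Qed.

Lemma natural_unique m f h : in_plus m f -> is_natural m f h -> eqI m h (natural m f).
Proof.
  intros Hf [A1 [B1 C1]]. destruct (natural_spec m f Hf) as [A2 [B2 C2]].
  intros k [Hk|Hk]; [rewrite A1, A2; auto|].
  apply incr_enum_unique; auto. intros x. rewrite C1, C2. tauto.
Qed.

Lemma natural_eqI m f g : in_plus m f -> in_plus m g -> eqI m f g -> eqI m (natural m f) (natural m g).
Proof.
  intros Hf Hg E. apply natural_unique; auto.
  destruct (natural_spec m f Hf) as [A [B C]]. split; [|split]; auto.
  - intros i Hi. rewrite A by auto. apply E. left; auto.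
  - intros x. rewrite C. split; intros H1 [j [Hj Hx]]; apply H1; exists j; split; auto;
      [rewrite E|rewrite <- E]; auto; right; auto.
Qed.

(** * Both orders imply dominance *)

Definition content (m : nat) (h : Z -> Z) (x : Z) : Z := ind (img_neg m h x) + ind (img_pos h x).

Definition dominates (m : nat) (f g : Z -> Z) : Prop :=
  (forall x, content m f x = content m g x) /\
  (forall k, - Z.of_nat m <= k <= -1 -> g k <= f k).

Lemma wcount_limit w m h x cn cp :
  w 0 = 0 -> (forall k, k < 0 -> w k = cn) -> (forall k, 0 < k -> w k = cp) ->
  (forall k l, - Z.of_nat m <= k <= -1 -> - Z.of_nat m <= l <= -1 -> h k = h l -> k = l) ->
  (forall k l, 1 <= k -> 1 <= l -> h k = h l -> k = l) ->
  (exists B, forall k, B <= k -> h k <> x) ->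
  eventually (fun W => wcount w m h W x = cn * ind (img_neg m h x) + cp * ind (img_pos h x)).
Proof.
  intros W0 Wn Wp Injn Injp [B HB]. exists (Z.to_nat B). intros W HW.
  set (F := fun k => Z.b2z (h k =? x)).
  unfold wcount. replace (m + 1 + W)%nat with (m + (1 + W))%nat by lia.
  rewrite zsum_split, (zsum_split _ _ 1 W). simpl.
  replace (- Z.of_nat m + Z.of_nat m + 0) with 0 by lia. rewrite W0.
  replace (- Z.of_nat m + Z.of_nat m + 1) with 1 by lia.
  rewrite (zsum_ext _ (fun k => cn * F k)) by (intros; rewrite Wn by lia; auto).
  rewrite (zsum_ext _ (fun k => cp * F k) 1) by (intros; rewrite Wp by lia; auto).
  rewrite !zsum_scale. unfold F.
  rewrite !zsum_count_inj by (intros; first [apply Injn; lia | apply Injp; lia]).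
  rewrite (ind_iff _ (img_neg m h x)) by (split; intros [k [Hk E]]; exists k; split; auto; lia).
  rewrite (ind_iff (exists k, 1 <= k < 1 + Z.of_nat W /\ h k = x) (img_pos h x)); [ring|].
  split; intros [k [Hk E]]; exists k; split; auto; [lia|].
  destruct (Z_lt_le_dec k (1 + Z.of_nat W)); [lia|]. exfalso. apply (HB k); auto. lia.
Qed.

Lemma wcount_in_plus m f x : in_plus m f ->
  eventually (fun W => wcount (fun k => Z.abs (Z.sgn k)) m f W x = content m f x).
Proof.
  intros Hf. pose proof Hf as [_ [_ [N HN]]].
  destruct (wcount_limit (fun k => Z.abs (Z.sgn k)) m f x 1 1) as [W0 H]; auto.
  - intros k Hk. rewrite Z.sgn_neg; lia.
  - intros k Hk. rewrite Z.sgn_pos; lia.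
  - apply inj_of_neq. intros i j Hi Hj Hij. pose proof (in_plus_neg_decr m f Hf i j). lia.
  - apply inj_of_neq. intros i j Hi Hj Hij. pose proof (in_plus_pos_decr m f Hf i j). lia.
  - exists (Z.max N (2 - x)). intros k Hk. rewrite HN; lia.
  - exists W0. intros W HW. rewrite H; auto. unfold content. lia.
Qed.

Lemma wcount_natural m f x : in_plus m f ->
  eventually (fun W => wcount Z.sgn m (natural m f) W x = 1 - content m f x).
Proof.
  intros Hf. pose proof (natural_incr m f Hf) as Incr.
  destruct (natural_spec m f Hf) as [A [B C]]. set (h := natural m f) in *.
  destruct (wcount_limit Z.sgn m h x (-1) 1) as [W0 H]; auto.
  - intros k Hk. rewrite Z.sgn_neg; lia.
  - intros k Hk. rewrite Z.sgn_pos; lia.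
  - apply inj_of_neq. intros i j Hi Hj Hij. rewrite !A by lia.
    pose proof (in_plus_neg_decr m f Hf i j). lia.
  - apply inj_of_neq. intros i j Hi Hj Hij. pose proof (Incr i j). lia.
  - exists (Z.max 1 (x - h 1 + 2)). intros k Hk. pose proof (Z_incr_lower_bound h B k). lia.
  - exists W0. intros W HW. rewrite H by auto. unfold content.
    rewrite (ind_iff (img_neg m h x) (img_neg m f x)) by (apply img_neg_ext; auto).
    rewrite (ind_iff (img_pos h x) (~ img_pos f x)) by apply C.
    rewrite ind_not. lia.
Qed.

Lemma zsum_b2z_bounds (b : Z -> bool) lo n : 0 <= zsum (fun k => Z.b2z (b k)) lo n <= Z.of_nat n.
Proof.
  assert (Hb : forall k, 0 <= Z.b2z (b k) <= 1) by (intros k; destruct (b k); simpl; lia).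
  pose proof (zsum_le (fun _ => 0) (fun k => Z.b2z (b k)) lo n ltac:(intros; apply Hb)).
  pose proof (zsum_le (fun k => Z.b2z (b k)) (fun _ => 1) lo n ltac:(intros; apply Hb)).
  rewrite !zsum_const in *. lia.
Qed.

Lemma nge_decr_bounds m h k x :
  (forall i j, - Z.of_nat m <= i -> i < j -> j <= -1 -> h j < h i) -> - Z.of_nat m <= k <= -1 ->
  (x <= h k -> k + Z.of_nat m + 1 <= nge m h x) /\ (h k < x -> nge m h x <= k + Z.of_nat m).
Proof.
  intros D Hk. unfold nge. split; intros Hx.
  - rewrite (zsum_split_at _ _ _ (k + 1)) by lia.
    rewrite (zsum_ext _ (fun _ => 1) (- Z.of_nat m)), zsum_const.
    + pose proof (zsum_b2z_bounds (fun i => x <=? h i) (k + 1)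
                    (m - Z.to_nat (k + 1 - - Z.of_nat m))). lia.
    + intros i Hi. destruct (Z.eq_dec i k) as [->|]; [zcase; simpl; lia|].
      specialize (D i k ltac:(lia) ltac:(lia) ltac:(lia)). zcase; simpl; lia.
  - rewrite (zsum_split_at _ _ _ k) by lia.
    rewrite (zsum_ext _ (fun _ => 0) k), zsum_const.
    + pose proof (zsum_b2z_bounds (fun i => x <=? h i) (- Z.of_nat m)
                    (Z.to_nat (k - - Z.of_nat m))). lia.
    + intros i Hi. destruct (Z.eq_dec i k) as [->|]; [zcase; simpl; lia|].
      specialize (D k i ltac:(lia) ltac:(lia) ltac:(lia)). zcase; simpl; lia.
Qed.

Lemma dominates_of_nge m f g : in_plus m f -> in_plus m g -> (forall x, nge m g x <= nge m f x) ->
  forall k, - Z.of_nat m <= k <= -1 -> g k <= f k.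
Proof.
  intros Hf Hg H k Hk. destruct (Z_le_gt_dec (g k) (f k)); auto. exfalso.
  destruct (nge_decr_bounds m g k (g k) (in_plus_neg_decr m g Hg) Hk) as [A _].
  destruct (nge_decr_bounds m f k (g k) (in_plus_neg_decr m f Hf) Hk) as [_ B].
  specialize (H (g k)). lia.
Qed.

Lemma bruhat_le_dominates m f g : in_plus m f -> in_plus m g -> bruhat_le m g f -> dominates m f g.
Proof.
  intros Hf Hg H. destruct (bruhat_le_counts m g f H) as [E N]. split.
  - intros x.
    destruct (eventually_and _ _ E
                (eventually_and _ _ (wcount_in_plus m f x Hf) (wcount_in_plus m g x Hg))) as [W0 HW].
    destruct (HW W0 (le_n _)) as [E' [Cf Cg]]. rewrite <- Cf, <- Cg, E'. auto.
  - apply dominates_of_nge; auto.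
Qed.

Lemma super_ge_dominates m f g : in_plus m f -> in_plus m g ->
  super_ge m (natural m f) (natural m g) -> dominates m f g.
Proof.
  intros Hf Hg H. destruct (super_ge_counts m _ _ H) as [E N].
  destruct (natural_spec m f Hf) as [Af _]. destruct (natural_spec m g Hg) as [Ag _]. split.
  - intros x.
    destruct (eventually_and _ _ E
                (eventually_and _ _ (wcount_natural m f x Hf) (wcount_natural m g x Hg))) as [W0 HW].
    destruct (HW W0 (le_n _)) as [E' [Cf Cg]]. specialize (E' x). lia.
  - apply dominates_of_nge; auto. intros x. specialize (N x).
    assert (Nf : nge m (natural m f) x = nge m f x)
      by (apply zsum_ext; intros; rewrite Af; auto; lia).
    assert (Ng : nge m (natural m g) x = nge m g x)
      by (apply zsum_ext; intros; rewrite Ag; auto; lia).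
    lia.
Qed.

Lemma clos_t_rt_t {A} (R : relation A) x y z :
  clos_trans A R x y -> clos_refl_trans A R y z -> clos_trans A R x z.
Proof.
  intros H1 H2. apply clos_rt_rtn1 in H2.
  induction H2 as [|y' z' Hstep _ IH]; auto. eapply t_trans; [exact IH|]. apply t_step; auto.
Qed.

Section AdjacentChains.

Variables (R : relation (Z -> Z)) (cmp : Z -> Z -> Prop) (ok : Z -> Prop).
Hypothesis adjacent_step :
  forall h k, ok k -> ok (k + 1) -> cmp (h k) (h (k + 1)) -> R h (act h k (k + 1)).

Lemma rot1_chain h s t : s <= t -> (forall k, s <= k <= t -> ok k) ->
  (forall k, s < k <= t -> cmp (h s) (h k)) -> clos_refl_trans _ R h (rot1 h s t).
Proof.
  intros Hst. remember (Z.to_nat (t - s)) as n eqn:En. revert h s Hst En.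
  induction n as [|n IH]; intros h s Hst En Hok Hc.
  - replace (rot1 h s t) with h; [apply rt_refl|].
    apply functional_extensionality. intros k. unfold rot1. zcase; subst; auto; f_equal; lia.
  - set (h1 := act h s (s + 1)).
    replace (rot1 h s t) with (rot1 h1 (s + 1) t).
    2:{ apply functional_extensionality. intros k. unfold rot1, h1, act, tau.
        zcase; try (f_equal; lia); lia. }
    eapply rt_trans; [apply rt_step, adjacent_step; try apply Hok; try apply Hc; lia|].
    apply IH; try lia; [intros; apply Hok; lia|].
    intros k Hk. unfold h1, act, tau. zcase; try lia. apply Hc; lia.
Qed.

Lemma rotr1_chain h s t : s <= t -> (forall k, s <= k <= t -> ok k) ->
  (forall k, s <= k < t -> cmp (h k) (h t)) -> clos_refl_trans _ R h (rotr1 h s t).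
Proof.
  intros Hst. remember (Z.to_nat (t - s)) as n eqn:En. revert h t Hst En.
  induction n as [|n IH]; intros h t Hst En Hok Hc.
  - replace (rotr1 h s t) with h; [apply rt_refl|].
    apply functional_extensionality. intros k. unfold rotr1. zcase; subst; auto; f_equal; lia.
  - set (h1 := act h (t - 1) t).
    replace (rotr1 h s t) with (rotr1 h1 s (t - 1)).
    2:{ apply functional_extensionality. intros k. unfold rotr1, h1, act, tau.
        zcase; try (f_equal; lia); lia. }
    apply (rt_trans _ _ _ h1).
    + apply rt_step. unfold h1.
      replace (act h (t - 1) t) with (act h (t - 1) (t - 1 + 1)) by (f_equal; lia).
      apply (adjacent_step h (t - 1)); try (apply Hok; lia).
      replace (t - 1 + 1) with t by lia. apply Hc; lia.
    + apply IH; try lia; [intros; apply Hok; lia|].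
      intros k Hk. unfold h1, act, tau. zcase; try lia. apply Hc; lia.
Qed.

End AdjacentChains.

Lemma bruhat_adjacent m h k : inI m k -> inI m (k + 1) -> h k < h (k + 1) ->
  bruhat_step m h (act h k (k + 1)).
Proof.
  intros. exists k, (k + 1). refine (conj _ (conj _ (conj _ (conj _ (eqI_refl _ _))))); auto; lia.
Qed.

Lemma super_adjacent_neg m h k : - Z.of_nat m <= k -> k + 1 <= -1 -> h k > h (k + 1) ->
  super_down m h (act h k (k + 1)).
Proof.
  intros. right; left. exists k, (k + 1).
  refine (conj _ (conj _ (conj _ (conj _ (eqI_refl _ _))))); unfold inI; lia.
Qed.

Lemma super_adjacent_pos m h k : 1 <= k -> h k < h (k + 1) -> super_down m h (act h k (k + 1)).
Proof.
  intros. right; right. exists k, (k + 1).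
  refine (conj _ (conj _ (conj _ (conj _ (eqI_refl _ _))))); unfold inI; lia.
Qed.

Lemma super_lower_pair m h i j v : - Z.of_nat m <= i <= -1 -> 1 <= j -> h i = h j -> v < h i ->
  clos_trans _ (super_down m) h (upd (upd h i v) j v).
Proof.
  intros Hi Hj Hij Hv.
  assert (Step : forall c, super_down m (upd (upd h i c) j c) (upd (upd h i (c - 1)) j (c - 1))).
  { intros c. left. exists i, j. unfold inI. repeat split; try lia.
    - unfold upd. zcase; lia.
    - intros k _. unfold upd, d. zcase; subst; rewrite ?Z.sgn_neg, ?Z.sgn_pos by lia; lia. }
  assert (Hh : upd (upd h i (h i)) j (h i) = h).
  { apply functional_extensionality. intros k. unfold upd. zcase; congruence. }
  remember (Z.to_nat (h i - v - 1)) as n eqn:En. revert v Hv En.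
  induction n as [|n IH]; intros v Hv En.
  - pose proof (Step (h i)) as S. rewrite Hh in S. replace v with (h i - 1) by lia. apply t_step, S.
  - pose proof (Step (v + 1)) as S. replace (v + 1 - 1) with v in S by lia.
    eapply t_trans; [apply (IH (v + 1)); lia|]. apply t_step, S.
Qed.

Lemma decr_split (h : Z -> Z) c lo hi : lo - 1 <= hi ->
  (forall i j, lo <= i -> i < j -> j <= hi -> h j < h i) -> (forall k, lo <= k <= hi -> h k <> c) ->
  exists p, lo - 1 <= p <= hi /\ (forall k, lo <= k <= p -> c < h k) /\
    (forall k, p < k <= hi -> h k < c).
Proof.
  intros Hlh D Hc.
  destruct (Z_greatest (fun p => forall k, lo <= k <= p -> c < h k) hi (lo - 1))
    as [p [Hp [Above Max]]];
    [lia|intros; lia|].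
  exists p. repeat split; try lia; auto. intros k Hk.
  destruct (Z_lt_le_dec (h k) c) as [|Hge]; auto. exfalso. apply (Max (p + 1)); [lia|].
  intros k' Hk'. destruct (Z_le_gt_dec k' p); [apply Above; lia|].
  specialize (Hc k ltac:(lia)). destruct (Z.eq_dec k' k) as [->|]; [lia|].
  specialize (D k' k ltac:(lia) ltac:(lia) ltac:(lia)). lia.
Qed.

(** * Exchanging a negative and a positive value *)

Section Exchange.

Variables (m : nat) (f g : Z -> Z) (i0 P Q q b : Z).

Hypotheses (Hf : in_plus m f) (Hi0 : - Z.of_nat m <= i0) (HP : i0 <= P <= -1) (HQ : 1 <= Q <= q)
  (f_q : f q = b) (b_lt_a : b < f i0)
  (f_gt_b : forall k, - Z.of_nat m <= k <= P -> b < f k)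
  (f_lt_b : forall k, P < k <= -1 -> f k < b)
  (f_gt_a : forall k, 1 <= k < Q -> f i0 < f k)
  (f_lt_a : forall k, Q <= k -> f k < f i0).

(* [f i0] leaves the negative part and enters the positive part at [Q], while [b = f q]
   travels the other way and lands at [P]; both parts stay sorted. *)
Definition f_exch : Z -> Z := act (rotr1 (rot1 f i0 P) Q q) P Q.

Lemma f_exch_neg k : - Z.of_nat m <= k <= -1 -> f_exch k = upd (rot1 f i0 P) P b k.
Proof.
  intros Hk. unfold f_exch. destruct (Z.eq_dec k P) as [->|HkP].
  - rewrite act_i, upd_at, rotr1_first, rot1_out by lia. auto.
  - rewrite act_other, rotr1_out, upd_other by lia. auto.
Qed.

Lemma f_exch_pos k : 1 <= k -> f_exch k = upd (rotr1 f Q q) Q (f i0) k.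
Proof.
  intros Hk. unfold f_exch. destruct (Z.eq_dec k Q) as [->|HkQ].
  - rewrite act_j, upd_at, rotr1_out, rot1_last by lia. auto.
  - rewrite act_other, upd_other by lia.
    unfold rotr1. zcase; try lia; rewrite rot1_out by lia; reflexivity.
Qed.

Lemma f_exch_in_plus : in_plus m f_exch.
Proof.
  pose proof (in_plus_neg_decr m f Hf) as Dn. pose proof (in_plus_pos_decr m f Hf) as Dp.
  split; [|split].
  - intros i Hi. rewrite !f_exch_neg by lia.
    apply Z.lt_gt, (neg_reinsert_decr m f b i0 P); auto; lia.
  - intros i Hi. rewrite !f_exch_pos by lia. apply Z.lt_gt, (pos_reinsert_decr f (f i0) Q q); auto; lia.
  - destruct Hf as [_ [_ [N HN]]]. exists (Z.max N (q + 1)). intros i Hi.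
    rewrite f_exch_pos, upd_other, rotr1_out by lia. apply HN; lia.
Qed.

Lemma b_notin_neg : ~ img_neg m f b.
Proof.
  intros [k [Hk E]]. destruct (Z_le_gt_dec k P); [specialize (f_gt_b k)|specialize (f_lt_b k)]; lia.
Qed.

Lemma a_notin_pos : ~ img_pos f (f i0).
Proof.
  intros [k [Hk E]]. destruct (Z_lt_le_dec k Q); [specialize (f_gt_a k)|specialize (f_lt_a k)]; lia.
Qed.

Lemma f_exch_content x : content m f_exch x = content m f x.
Proof.
  assert (Inj_neg : forall k l,
            - Z.of_nat m <= k <= -1 -> - Z.of_nat m <= l <= -1 -> f k = f l -> k = l).
  { apply inj_of_neq. intros i j Hi Hj Hij. pose proof (in_plus_neg_decr m f Hf i j). lia. }
  assert (Inj_pos : forall k l, 1 <= k -> 1 <= l -> f k = f l -> k = l).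
  { apply inj_of_neq. intros i j Hi Hj Hij. pose proof (in_plus_pos_decr m f Hf i j). lia. }
  unfold content.
  rewrite (ind_iff _ _ (img_neg_ext m f_exch (upd (rot1 f i0 P) P b) x f_exch_neg)).
  rewrite (ind_iff _ _ (img_pos_ext f_exch (upd (rotr1 f Q q) Q (f i0)) x f_exch_pos)).
  rewrite (ind_iff _ _ (img_neg_reinsert m f b i0 P x ltac:(lia) ltac:(lia) Inj_neg)).
  rewrite (ind_iff _ _ (img_pos_reinsert f (f i0) Q q x ltac:(lia) Inj_pos)), f_q.
  rewrite !ind_exchange; try lia; intros ->;
    first [ apply a_notin_pos | apply b_notin_neg
          | exists q; split; auto; lia | exists i0; split; auto; lia ].
Qed.

Lemma f_exch_sum_lt : zsum f_exch (- Z.of_nat m) m < zsum f (- Z.of_nat m) m.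
Proof.
  pose proof (in_plus_neg_decr m f Hf) as Dn.
  assert (Le : forall k, - Z.of_nat m <= k <= -1 -> f_exch k <= f k /\ (k = i0 -> f_exch k < f k)).
  { intros k Hk. rewrite f_exch_neg by auto.
    destruct (Z.eq_dec k P) as [->|]; [rewrite upd_at; specialize (f_gt_b P); lia|].
    rewrite upd_other by auto. destruct (Z_lt_le_dec k P).
    - destruct (Z_lt_le_dec k i0); [rewrite rot1_out by lia; lia|].
      rewrite rot1_in by lia. specialize (Dn k (k + 1)). lia.
    - rewrite rot1_out by lia. lia. }
  apply zsum_lt; [intros k Hk; apply Le; lia|]. exists i0. split; [lia|]. apply Le; lia.
Qed.

Lemma f_exch_bruhat : clos_trans _ (bruhat_step m) f_exch f.
Proof.
  pose proof (in_plus_neg_decr m f Hf) as Dn. pose proof (in_plus_pos_decr m f Hf) as Dp.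
  set (X := rot1 f i0 P). set (Y := rotr1 X Q q).
  assert (X_pos : forall k, 0 <= k -> X k = f k) by (intros; apply rot1_out; lia).
  apply (clos_t_rt_t _ _ Y).
  { apply t_step. rewrite <- (act_involutive Y P Q). exists P, Q. unfold inI.
    refine (conj _ (conj _ (conj _ (conj _ (eqI_refl _ _))))); try lia.
    rewrite f_exch_neg, f_exch_pos, !upd_at by lia. auto. }
  apply (rt_trans _ _ _ X).
  - rewrite <- (rot1_rotr1 X Q q) by lia.
    apply (rot1_chain _ Z.lt (fun k => 1 <= k)); try lia.
    + intros h k Hk Hk1 Hc. apply bruhat_adjacent; auto; unfold inI; lia.
    + intros k Hk. unfold Y. rewrite rotr1_first, rotr1_in, !X_pos by lia.
      destruct (Z.eq_dec (k - 1) q); [lia|]. specialize (Dp (k - 1) q). lia.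
  - rewrite <- (rotr1_rot1 f i0 P) by lia.
    apply (rotr1_chain _ Z.lt (fun k => - Z.of_nat m <= k <= -1)); try lia.
    + intros h k Hk Hk1 Hc. apply bruhat_adjacent; auto; unfold inI; lia.
    + intros k Hk. unfold X. rewrite rot1_in, rot1_last by lia. specialize (Dn i0 (k + 1)). lia.
Qed.

Section NaturalSide.

Variables (r R : Z).
Hypotheses (HR : 1 <= R <= r) (nat_r : natural m f r = f i0)
  (nat_lt_b : forall k, 1 <= k < R -> natural m f k < b)
  (nat_gt_b : forall k, R <= k -> b < natural m f k).

Definition h_exch : Z -> Z := upd (upd (rotr1 (rot1 (natural m f) i0 P) R r) P b) R b.

Lemma h_exch_reach : clos_trans _ (super_down m) (natural m f) h_exch.
Proof.
  destruct (natural_spec m f Hf) as [Af _]. pose proof (in_plus_neg_decr m f Hf) as Dn.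
  set (Z1 := rot1 (natural m f) i0 P). set (Z2 := rotr1 Z1 R r).
  apply (clos_rt_t _ _ _ Z2).
  - apply (rt_trans _ _ _ Z1).
    + apply (rot1_chain _ Z.gt (fun k => - Z.of_nat m <= k <= -1)); try lia.
      * intros h k Hk Hk1 Hc. apply super_adjacent_neg; auto; lia.
      * intros k Hk. rewrite !Af by lia. apply Z.lt_gt, Dn; lia.
    + apply (rotr1_chain _ Z.lt (fun k => 1 <= k)); try lia.
      * intros h k Hk Hk1 Hc. apply super_adjacent_pos; auto.
      * intros k Hk. unfold Z1. rewrite !rot1_out by lia. apply natural_incr; auto; lia.
  - assert (Z2_P : Z2 P = f i0) by (unfold Z2, Z1; rewrite rotr1_out, rot1_last, Af by lia; auto).
    assert (Z2_R : Z2 R = f i0) by (unfold Z2, Z1; rewrite rotr1_first, rot1_out by lia; auto).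
    apply (super_lower_pair m Z2 P R b); lia.
Qed.

Lemma h_exch_pos k : 1 <= k -> h_exch k = upd (rotr1 (natural m f) R r) R b k.
Proof.
  intros Hk. unfold h_exch, upd, rotr1. zcase; try lia; auto; rewrite rot1_out by lia; reflexivity.
Qed.

Lemma h_exch_natural : is_natural m f_exch h_exch.
Proof.
  destruct (natural_spec m f Hf) as [Af [_ Cf]].
  assert (Inj : forall k l, 1 <= k -> 1 <= l -> natural m f k = natural m f l -> k = l).
  { apply inj_of_neq. intros i j Hi Hj Hij. pose proof (natural_incr m f Hf i j). lia. }
  assert (Inj_f : forall k l, 1 <= k -> 1 <= l -> f k = f l -> k = l).
  { apply inj_of_neq. intros i j Hi Hj Hij. pose proof (in_plus_pos_decr m f Hf i j). lia. }
  split; [|split].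
  - intros i Hi. rewrite f_exch_neg by auto. unfold h_exch. rewrite upd_other by lia.
    destruct (Z.eq_dec i P) as [->|]; [rewrite !upd_at; auto|].
    rewrite !upd_other, rotr1_out by lia. unfold rot1. zcase; apply Af; lia.
  - intros i Hi. rewrite !h_exch_pos by lia.
    apply (pos_reinsert_incr (natural m f) b R r); try lia; auto using natural_incr.
  - intros x. change (img_pos h_exch x <-> ~ img_pos f_exch x).
    rewrite (img_pos_ext _ _ x h_exch_pos), (img_pos_ext _ _ x (f_exch_pos)).
    rewrite img_pos_reinsert, img_pos_reinsert, <- f_q, nat_r by (auto; lia).
    change (img_pos (natural m f) x) with (exists j, 1 <= j /\ natural m f j = x). rewrite Cf.
    assert (Hb : img_pos f (f q)) by (exists q; split; auto; lia).
    destruct (Z.eq_dec x (f q)) as [->|Hxb]; [split; [intros _ [[_ H]|H]; lia|auto]|].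
    split.
    + intros [[Hx Hxa]|Hx]; [|lia]. intros [[H _]|H]; auto.
    + intros H. left. split; [intros H'; apply H; left; auto|intros ->; apply H; right; auto].
Qed.

End NaturalSide.

Lemma natural_f_exch : exists h, clos_trans _ (super_down m) (natural m f) h /\ is_natural m f_exch h.
Proof.
  destruct (natural_spec m f Hf) as [_ [_ Cf]].
  destruct (proj2 (Cf (f i0)) a_notin_pos) as [r [Hr Hhr]].
  assert (Decr : forall i j, 1 <= i -> i < j -> j <= r -> - natural m f j < - natural m f i).
  { intros i j Hi Hij Hj. pose proof (natural_incr m f Hf i j). lia. }
  assert (Miss : forall k, 1 <= k <= r -> - natural m f k <> - b).
  { intros k Hk E. apply (proj1 (Cf b)); [exists k; split; lia|exists q; split; auto; lia]. }
  destruct (decr_split _ _ 1 r ltac:(lia) Decr Miss) as [p [Hp [Below Above]]].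
  assert (p < r) by (destruct (Z_le_gt_dec r p); [specialize (Below r ltac:(lia)); lia|lia]).
  assert (Lt : forall k, 1 <= k < p + 1 -> natural m f k < b)
    by (intros k Hk; specialize (Below k); lia).
  assert (Gt : forall k, p + 1 <= k -> b < natural m f k).
  { intros k Hk. destruct (Z_le_gt_dec k r); [specialize (Above k); lia|].
    pose proof (natural_incr m f Hf r k). lia. }
  exists (h_exch r (p + 1)). split; [apply h_exch_reach|apply h_exch_natural]; auto; lia.
Qed.

Hypotheses (Hg : in_plus m g) (Hdom : dominates m f g)
  (agree : forall k, - Z.of_nat m <= k < i0 -> f k = g k)
  (cover : forall z, b < z <= f i0 -> exists k, - Z.of_nat m <= k <= -1 /\ g k < z <= f k).

Lemma g_below_gap k c : - Z.of_nat m <= k <= -1 -> b <= c < f i0 ->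
  (forall j, - Z.of_nat m <= j <= -1 -> c < f j -> j <= k) -> g k <= c.
Proof.
  intros Hk Hc Hj. destruct (Z_le_gt_dec (g k) c) as [|Hgt]; auto. exfalso.
  destruct (cover (c + 1)) as [j [Hjr [Hgj Hfj]]]; [lia|].
  specialize (Hj j Hjr ltac:(lia)). destruct (Z.eq_dec j k) as [->|]; [lia|].
  pose proof (in_plus_neg_decr m g Hg j k). lia.
Qed.

Lemma f_exch_dominates : dominates m f_exch g.
Proof.
  pose proof (in_plus_neg_decr m f Hf) as Dn.
  split; [intros x; rewrite f_exch_content; apply Hdom|].
  intros k Hk. rewrite f_exch_neg by auto.
  destruct (Z.eq_dec k P) as [->|]; [rewrite upd_at|rewrite upd_other by auto].
  - apply g_below_gap; auto; try lia. intros j Hj Hbj. destruct (Z_le_gt_dec j P); auto.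
    specialize (f_lt_b j). lia.
  - destruct (Z_lt_le_dec k i0); [rewrite rot1_out, agree by lia; lia|].
    destruct (Z_lt_le_dec k P); [rewrite rot1_in by lia|rewrite rot1_out by lia; apply Hdom; lia].
    apply g_below_gap; [lia| |].
    + specialize (f_gt_b (k + 1)). specialize (Dn i0 (k + 1)). lia.
    + intros j Hj Hfj. destruct (Z_le_gt_dec j k); auto.
      destruct (Z.eq_dec j (k + 1)) as [->|]; [lia|]. specialize (Dn (k + 1) j). lia.
Qed.

End Exchange.

(** * Dominance implies both orders *)

Lemma pos_of_content m f g x : content m f x = content m g x ->
  img_neg m g x -> ~ img_neg m f x -> img_pos f x.
Proof.
  unfold content. intros E Hg Hf.
  rewrite (ind_false (img_neg m f x)), (ind_true (img_neg m g x)) in E by auto.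
  destruct (ind_cases (img_pos f x)) as [[? _]|[_ ?]], (ind_cases (img_pos g x)) as [[? _]|[? _]];
    auto; lia.
Qed.

Lemma not_pos_of_content m f g x : content m f x = content m g x ->
  img_neg m f x -> ~ img_neg m g x -> ~ img_pos f x.
Proof.
  unfold content. intros E Hf Hg Hp.
  rewrite (ind_true (img_neg m f x)), (ind_false (img_neg m g x)), (ind_true (img_pos f x)) in E by auto.
  destruct (ind_cases (img_pos g x)) as [[? _]|[? _]]; lia.
Qed.

Lemma first_difference m f g : dominates m f g ->
  (exists k, - Z.of_nat m <= k <= -1 /\ f k <> g k) ->
  exists i0, - Z.of_nat m <= i0 <= -1 /\ (forall k, - Z.of_nat m <= k < i0 -> f k = g k) /\ g i0 < f i0.
Proof.
  intros [_ D] [k0 [Hk0 Hne]].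
  destruct (Z_least (fun k => f k <> g k) (- Z.of_nat m) k0) as [i0 [Hi0 [Hne0 Hmin]]]; [lia|auto|].
  exists i0. split; [lia|split].
  - intros k Hk. destruct (Z.eq_dec (f k) (g k)); auto. exfalso. eapply Hmin; eauto.
  - specialize (D i0 ltac:(lia)). lia.
Qed.

(* [b] is the largest value below [f i0] that is not covered by any interval (g k, f k]. *)
Lemma gap_exists m f g i0 : in_plus m g -> dominates m f g -> - Z.of_nat m <= i0 <= -1 -> g i0 < f i0 ->
  exists b, b < f i0 /\ img_neg m g b /\ ~ img_neg m f b /\
    forall z, b < z <= f i0 -> exists k, - Z.of_nat m <= k <= -1 /\ g k < z <= f k.
Proof.
  intros Hg [_ D] Hi0 Hlt. pose proof (in_plus_neg_decr m g Hg) as Dg.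
  set (cov := fun z => exists k, - Z.of_nat m <= k <= -1 /\ g k < z <= f k).
  destruct (Z_greatest (fun z => ~ cov z) (f i0 - 1) (Z.min (f i0 - 1) (g (-1))))
    as [b [Hb [Hncov Hmax]]]; [lia| |].
  { intros [k [Hk Hc]]. destruct (Z.eq_dec k (-1)) as [->|]; [lia|]. specialize (Dg k (-1)). lia. }
  assert (Cover : forall z, b < z <= f i0 -> cov z).
  { intros z Hz. destruct (Z.eq_dec z (f i0)) as [->|]; [exists i0; split; auto; lia|].
    apply NNPP. apply Hmax. lia. }
  destruct (Cover (b + 1)) as [kb [Hkb Hgkb]]; [lia|].
  assert (Ekb : g kb = b).
  { destruct (Z.eq_dec (g kb) b); auto. exfalso. apply Hncov. exists kb. split; auto. lia. }
  exists b. split; [lia|split; [exists kb; auto|split; auto]].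
  intros [j [Hj Efj]].
  assert (g j = b).
  { specialize (D j Hj). destruct (Z_lt_ge_dec (g j) b); [|lia].
    exfalso. apply Hncov. exists j. split; auto. lia. }
  destruct (Z.lt_total j kb) as [Hjk|[->|Hjk]]; [pose proof (Dg j kb)|lia|pose proof (Dg kb j)]; lia.
Qed.

Lemma descent_step m f g : in_plus m f -> in_plus m g -> dominates m f g ->
  (exists k, - Z.of_nat m <= k <= -1 /\ f k <> g k) ->
  exists f', in_plus m f' /\ dominates m f' g /\
    zsum f' (- Z.of_nat m) m < zsum f (- Z.of_nat m) m /\
    clos_trans _ (bruhat_step m) f' f /\
    exists h, clos_trans _ (super_down m) (natural m f) h /\ is_natural m f' h.
Proof.
  intros Hf Hg Hdom Hne. pose proof Hdom as [Hcont Hle].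
  pose proof (in_plus_neg_decr m f Hf) as Dn. pose proof (in_plus_pos_decr m f Hf) as Dp.
  destruct (first_difference m f g Hdom Hne) as [i0 [Hi0 [Agree Hlt]]].
  destruct (gap_exists m f g i0 Hg Hdom Hi0 Hlt) as [b [Hba [Hgb [Hfb Cover]]]].
  destruct (pos_of_content m f g b (Hcont b) Hgb Hfb) as [q [Hq Hfq]].
  assert (Ha : ~ img_pos f (f i0)).
  { apply (not_pos_of_content m f g); [apply Hcont|exists i0; auto|].
    intros [k [Hk E]]. destruct (Z.lt_total k i0) as [Hki|[->|Hki]]; [|lia|].
    - rewrite <- Agree in E by lia. specialize (Dn k i0). lia.
    - pose proof (in_plus_neg_decr m g Hg i0 k). lia. }
  destruct (decr_split f b i0 (-1)) as [P [HP [Above_b Below_b]]]; [lia|intros; apply Dn; lia| |].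
  { intros k Hk E. apply Hfb. exists k. split; auto. lia. }
  destruct (decr_split f (f i0) 1 q) as [p [Hp [Above_a Below_a]]]; [lia|intros; apply Dp; lia| |].
  { intros k Hk E. apply Ha. exists k. split; auto. lia. }
  assert (i0 <= P) by (destruct (Z_lt_le_dec P i0); [specialize (Below_b i0); lia|lia]).
  assert (p < q) by (destruct (Z_lt_le_dec p q); [lia|specialize (Above_a q); lia]).
  assert (f_gt_b : forall k, - Z.of_nat m <= k <= P -> b < f k).
  { intros k Hk. destruct (Z_lt_le_dec k i0); [specialize (Dn k i0)|specialize (Above_b k)]; lia. }
  assert (f_lt_a : forall k, p + 1 <= k -> f k < f i0).
  { intros k Hk. destruct (Z_le_gt_dec k q); [specialize (Below_a k)|specialize (Dp q k)]; lia. }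
  assert (f_gt_a : forall k, 1 <= k < p + 1 -> f i0 < f k) by (intros; apply Above_a; lia).
  exists (f_exch f i0 P (p + 1) q).
  split; [|split; [|split; [|split]]].
  - apply (f_exch_in_plus m f i0 P (p + 1) q b); auto; lia.
  - apply (f_exch_dominates m f g i0 P (p + 1) q b); auto; lia.
  - apply (f_exch_sum_lt m f i0 P (p + 1) q b); auto; lia.
  - apply (f_exch_bruhat m f i0 P (p + 1) q b); auto; lia.
  - apply (natural_f_exch m f i0 P (p + 1) q b); auto; lia.
Qed.

Lemma dominates_eqI m f g : in_plus m f -> in_plus m g -> dominates m f g ->
  (forall k, - Z.of_nat m <= k <= -1 -> f k = g k) -> eqI m f g.
Proof.
  intros Hf Hg [Hcont _] E.
  assert (Pos : forall x, img_pos f x <-> img_pos g x).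
  { intros x. specialize (Hcont x). unfold content in Hcont.
    rewrite (ind_iff _ _ (img_neg_ext m f g x E)) in Hcont.
    destruct (ind_cases (img_pos f x)) as [[? ?]|[? ?]], (ind_cases (img_pos g x)) as [[? ?]|[? ?]];
      tauto || lia. }
  intros k [Hk|Hk]; [auto|].
  enough (- f k = - g k) by lia.
  apply (incr_enum_unique (fun j => - f j) (fun j => - g j)); auto.
  - intros i Hi. pose proof (in_plus_pos_decr m f Hf i (i + 1)). lia.
  - intros i Hi. pose proof (in_plus_pos_decr m g Hg i (i + 1)). lia.
  - intros x. split; intros [j [Hj Hx]];
      [destruct (proj1 (Pos (- x))) as [j' [Hj' Hx']]|destruct (proj2 (Pos (- x))) as [j' [Hj' Hx']]];
      try (exists j; split; auto; lia); exists j'; split; auto; lia.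
Qed.

Lemma bruhat_le_extend m g f' f :
  bruhat_le m g f' -> clos_trans _ (bruhat_step m) f' f -> bruhat_le m g f.
Proof.
  intros [E|C] H; right; [|eapply t_trans; eauto].
  revert g E. induction H as [x y S|x y z H1 IH1 H2 IH2]; intros g E.
  - apply t_step. eapply bruhat_step_eqI_l; eauto.
  - eapply t_trans; [apply IH1|]; eauto.
Qed.

Lemma super_gt_eqI_r m F h h' : super_gt m F h -> eqI m h h' -> super_gt m F h'.
Proof.
  unfold super_gt. intros H. revert h'. induction H as [x y S|x y z H1 _ _ IH2]; intros h' E.
  - apply t_step. eapply super_down_eqI_r; eauto.
  - eapply t_trans; [exact H1|]. apply IH2; auto.
Qed.

Lemma super_ge_extend m F h F' G : super_gt m F h -> eqI m h F' -> super_ge m F' G -> super_ge m F G.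
Proof.
  intros H E [C|E']; left; [eapply t_trans; [eapply super_gt_eqI_r|]; eauto|].
  eapply super_gt_eqI_r; [eapply super_gt_eqI_r|]; eauto.
Qed.

Lemma dominates_orders m f g : in_plus m f -> in_plus m g -> dominates m f g ->
  bruhat_le m g f /\ super_ge m (natural m f) (natural m g).
Proof.
  intros Hf Hg Hdom.
  remember (Z.to_nat (zsum f (- Z.of_nat m) m - zsum g (- Z.of_nat m) m)) as n eqn:En.
  revert f Hf Hdom En. induction n as [n IH] using lt_wf_ind. intros f Hf Hdom En.
  destruct (classic (exists k, - Z.of_nat m <= k <= -1 /\ f k <> g k)) as [Hne|Heq].
  - destruct (descent_step m f g Hf Hg Hdom Hne)
      as [f' [Hf' [Hdom' [Hsum [Hbru [h [Hsup Hnat]]]]]]].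
    assert (zsum g (- Z.of_nat m) m <= zsum f' (- Z.of_nat m) m)
      by (apply zsum_le; intros; apply Hdom'; lia).
    destruct (IH (Z.to_nat (zsum f' (- Z.of_nat m) m - zsum g (- Z.of_nat m) m)) ltac:(lia)
                 f' Hf' Hdom' eq_refl) as [IHb IHs].
    split.
    + eapply bruhat_le_extend; eauto.
    + eapply super_ge_extend; eauto. apply natural_unique; auto.
  - assert (E : eqI m f g).
    { apply dominates_eqI; auto. intros k Hk. apply NNPP. intros Hne. apply Heq. eauto. }
    split; [left; apply eqI_sym; auto|right; apply natural_eqI; auto].
Qed.

Theorem lemma6p6 (m : nat) (f g : Z -> Z) :
  in_plus m f -> in_plus m g ->
  (bruhat_le m g f <-> super_ge m (natural m f) (natural m g)).
Proof.
  intros Hf Hg. split; intros H; apply dominates_orders; auto.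
  - apply bruhat_le_dominates; auto.
  - apply super_ge_dominates; auto.
Qed.
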